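(* Let $x:[t_0,t_c]\to\mathbb{R}^n$ and $u:[t_0,t_c]\to\mathbb{R}^d$ be continuous, $k_m>0$, and let $m:[t_0,t_c]\to\mathbb{R}^{n\times n(n+d)}$ solve $\dot m=Y(x(t),u(t))-k_m m$, $m(t_0)=0$. Let $t_0\le t_{w_1}<\dots<t_{w_p}=t_c$ with $p\ge n+d$, $m_j=m(t_{w_j})$ and $M=[m_1^T,\dots,m_p^T]^T\in\mathbb{R}^{np\times n(n+d)}$. If $\operatorname{rank}(M)=n(n+d)$, then the signal $w(t)=[x(t)^T,u(t)^T]^T$ is exciting over $[t_0,t_c]$, i.e. there is $\alpha>0$ with $\int_{t_0}^{t_c}w(\tau)w(\tau)^T\,d\tau\ge\alpha I_{n+d}$.
   Context: $Y(x,u)=[I_n\otimes x^T,\ I_n\otimes u^T]\in\mathbb{R}^{n\times n(n+d)}$. A bounded vector signal $w(t)$ is called exciting over an interval $[t,t+T]$, $T>0$, if there is $\alpha>0$ with $\int_t^{t+T}w(\tau)w(\tau)^T\,d\tau\ge\alpha I$ (matrix inequality in the positive semidefinite order). *)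

From Stdlib Require Import Reals Lra Lia Arith.
Open Scope R_scope.

Fixpoint fsum (N : nat) (f : nat -> R) : R :=
  match N with
  | O => 0
  | S k => fsum k f + f k
  end.

Definition cont_on (f : R -> R) (a b : R) : Prop :=
  forall t, a <= t <= b -> limit1_in f (fun s => a <= s <= b) (f t) t.

(* Entry (i, c) of Y(x,u) = [I_n (x) x^T, I_n (x) u^T] in R^{n x n(n+d)},
   0-based indices; column c < n*n is block column of I_n (x) x^T,
   c = k*n + l gives delta_{ik} x_l; column n*n + k*d + l gives delta_{ik} u_l. *)
Definition Yent (n d : nat) (x u : nat -> R) (i c : nat) : R :=
  if (c <? n * n)%nat then
    (if Nat.eqb i (c / n) then x (c mod n) else 0)
  else
    let c' := (c - n * n)%nat in
    if Nat.eqb i (c' / d) then u (c' mod d) else 0.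

(* w = [x^T, u^T]^T in R^{n+d}, padded with zeros beyond index n+d. *)
Definition wsig (n d : nat) (x u : R -> nat -> R) (t : R) (l : nat) : R :=
  if (l <? n)%nat then x t l
  else if (l <? n + d)%nat then u t (l - n)%nat else 0.

(* The N-dimensional signal w is exciting over [a,b]: there is alpha > 0 with
   int_a^b w w^T >= alpha I_N in the positive semidefinite order, i.e.
   v^T (int_a^b w w^T) v >= alpha v^T v for all v in R^N.  The integral is the
   entrywise Riemann integral; RiemannInt does not depend on the
   integrability proof, so quantifying over it is harmless. *)
Definition exciting (N : nat) (w : R -> nat -> R) (a b : R) : Prop :=
  exists alpha : R, alpha > 0 /\
    forall pr : (forall i j : nat, Riemann_integrable (fun t => w t i * w t j) a b),
    forall v : nat -> R,
      fsum N (fun i => fsum N (fun j => v i * RiemannInt (pr i j) * v j))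
      >= alpha * fsum N (fun i => v i * v i).

(* rank(M) = number of columns (full column rank) for the stacked matrix
   M = [m(tw 0); ...; m(tw (p-1))] (each block n x ncol):
   the columns are linearly independent, i.e. M v = 0 implies v = 0. *)
Definition stacked_full_col_rank (n p ncol : nat) (m : R -> nat -> nat -> R)
  (tw : nat -> R) : Prop :=
  forall v : nat -> R,
    (forall j i, (j < p)%nat -> (i < n)%nat ->
       fsum ncol (fun c => m (tw j) i c * v c) = 0) ->
    forall c, (c < ncol)%nat -> v c = 0.

(* Choose coefficients theta with Y(x, u) theta = e_0 (v . w).  If v . w vanishes
   on (t0, tc), each row of m theta solves z' = - km z with z(t0) = 0, hence
   vanishes, so M theta = 0 and the rank hypothesis gives theta = 0, i.e. v = 0.
   Thus the Gram matrix of w, whose quadratic form is the integral of (v . w)^2,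
   is positive definite; by induction on the dimension through Schur complements
   a positive definite form dominates alpha |v|^2 for some alpha > 0. *)

From Stdlib Require Import Reals Lra Lia Psatz Classical.
From Coquelicot Require Import Coquelicot.
Open Scope R_scope.

Lemma fsum_ext N f g : (forall i, (i < N)%nat -> f i = g i) -> fsum N f = fsum N g.
Proof.
  induction N as [|N IH]; simpl; intros H; auto.
  rewrite IH by (intros; apply H; lia). rewrite H by lia. reflexivity.
Qed.

Lemma fsum_add N f g : fsum N (fun i => f i + g i) = fsum N f + fsum N g.
Proof. induction N as [|N IH]; simpl; [lra|]. rewrite IH; lra. Qed.

Lemma fsum_scal N c f : fsum N (fun i => c * f i) = c * fsum N f.
Proof. induction N as [|N IH]; simpl; [lra|]. rewrite IH; lra. Qed.

Lemma fsum_eq0 N f : (forall i, (i < N)%nat -> f i = 0) -> fsum N f = 0.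
Proof.
  induction N as [|N IH]; simpl; intros H; [lra|].
  rewrite IH by (intros; apply H; lia). rewrite H by lia. lra.
Qed.

Lemma fsum_nonneg N f : (forall i, (i < N)%nat -> 0 <= f i) -> 0 <= fsum N f.
Proof.
  induction N as [|N IH]; simpl; intros H; [lra|].
  assert (0 <= f N) by (apply H; lia).
  assert (0 <= fsum N f) by (apply IH; intros; apply H; lia).
  lra.
Qed.

Lemma fsum_mult N M f g :
  fsum N f * fsum M g = fsum N (fun i => fsum M (fun j => f i * g j)).
Proof. induction N as [|N IH]; simpl; [lra|]. rewrite <- IH, fsum_scal. lra. Qed.

Lemma fsum_split N1 N2 f :
  fsum (N1 + N2) f = fsum N1 f + fsum N2 (fun j => f (N1 + j)%nat).
Proof.
  induction N2 as [|N2 IH]; simpl.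
  - rewrite Nat.add_0_r; lra.
  - rewrite Nat.add_succ_r; simpl. rewrite IH. lra.
Qed.

Lemma fsum_trunc K N f : (K <= N)%nat ->
  (forall i, (K <= i < N)%nat -> f i = 0) -> fsum N f = fsum K f.
Proof.
  intros HKN Hz. replace N with (K + (N - K))%nat by lia.
  rewrite fsum_split, (fsum_eq0 (N - K)) by (intros; apply Hz; lia). ring.
Qed.

Lemma fsum_Cauchy_Schwarz N b v :
  (fsum N (fun i => b i * v i)) ^ 2
  <= fsum N (fun i => b i * b i) * fsum N (fun i => v i * v i).
Proof.
  induction N as [|N IH]; simpl; [lra|].
  set (S := fsum N (fun i => b i * v i)) in *.
  set (A := fsum N (fun i => b i * b i)) in *.
  set (B := fsum N (fun i => v i * v i)) in *.
  assert (HA : 0 <= A) by (apply fsum_nonneg; intros; nra).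
  assert (HB : 0 <= B) by (apply fsum_nonneg; intros; nra).
  set (x := b N); set (y := v N); clearbody S A B x y.
  assert (Hcross : 2 * S * x * y <= A * y * y + x * x * B).
  { destruct (Req_dec A 0) as [HA0|HA0].
    - assert (S = 0) by (rewrite HA0 in IH; nra). subst. nra.
    - (* Multiply by A > 0 and complete the square. *)
      assert (A * (A * y * y + x * x * B - 2 * S * x * y)
              = (A * y - S * x) ^ 2 + x * x * (A * B - S ^ 2)) by ring.
      assert (0 <= x * x * (A * B - S ^ 2)) by (apply Rmult_le_pos; nra).
      assert (0 <= (A * y - S * x) ^ 2) by apply pow2_ge_0.
      nra. }
  nra.
Qed.

Definition qform (N : nat) (A : nat -> nat -> R) (v : nat -> R) : R :=
  fsum N (fun i => fsum N (fun j => v i * A i j * v j)).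

Definition sqnorm (N : nat) (v : nat -> R) : R := fsum N (fun i => v i * v i).

Lemma qform_ext N A v v' :
  (forall i, (i < N)%nat -> v i = v' i) -> qform N A v = qform N A v'.
Proof.
  intros H. unfold qform.
  apply fsum_ext; intros; apply fsum_ext; intros. rewrite !H; auto.
Qed.

Lemma qform_S N A v :
  qform (S N) A v = qform N A v
    + v N * fsum N (fun i => (A i N + A N i) * v i) + A N N * (v N * v N).
Proof.
  unfold qform; simpl. rewrite fsum_add.
  assert (fsum N (fun i => v i * A i N * v N) + fsum N (fun j => v N * A N j * v j)
          = v N * fsum N (fun i => (A i N + A N i) * v i)).
  { rewrite <- fsum_scal, <- fsum_add. apply fsum_ext; intros; ring. }
  lra.
Qed.

(* The Schur complement of the pivot N in the symmetric part (A + A^T) / 2, which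
   has the same quadratic form as A. *)
Definition schur_compl (N : nat) (A : nat -> nat -> R) (i j : nat) : R :=
  A i j - (A i N + A N i) * (A j N + A N j) / (4 * A N N).

Lemma qform_S_schur N A v : A N N <> 0 ->
  let B := fsum N (fun i => (A i N + A N i) * v i) in
  qform (S N) A v = A N N * (v N + B / (2 * A N N)) ^ 2 + qform N (schur_compl N A) v.
Proof.
  intros Ha B. rewrite qform_S. fold B.
  assert (qform N (schur_compl N A) v = qform N A v - B * B / (4 * A N N)) as ->.
  { unfold B. rewrite fsum_mult. unfold qform, schur_compl.
    transitivity (fsum N (fun i => fsum N (fun j => v i * A i j * v j)
      + (- / (4 * A N N)) * fsum N (fun j =>
          (A i N + A N i) * v i * ((A j N + A N j) * v j)))).
    - apply fsum_ext; intros. rewrite <- fsum_scal, <- fsum_add.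
      apply fsum_ext; intros. field. auto.
    - rewrite fsum_add, fsum_scal. field. auto. }
  field. auto.
Qed.

Lemma qform_S_unit N A : qform (S N) A (fun i => if (i =? N)%nat then 1 else 0) = A N N.
Proof.
  set (e := fun i => if (i =? N)%nat then 1 else 0).
  assert (He : forall i, (i < N)%nat -> e i = 0).
  { intros i Hi. unfold e. destruct (Nat.eqb_spec i N); [lia | auto]. }
  rewrite qform_S, (qform_ext N A e (fun _ => 0)) by auto.
  rewrite (fsum_eq0 N (fun i => (A i N + A N i) * e i)) by (intros; rewrite He; auto; ring).
  unfold qform. rewrite fsum_eq0 by (intros; apply fsum_eq0; intros; ring).
  unfold e; rewrite Nat.eqb_refl. ring.
Qed.

Lemma schur_step_bound a al beta : 0 < a -> 0 < al -> 0 <= beta ->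
  exists mu, 0 < mu /\ forall y B s Q, 0 <= s -> B ^ 2 <= beta * s -> Q >= al * s ->
    a * (y + B / (2 * a)) ^ 2 + Q >= mu * (s + y * y).
Proof.
  intros Ha Hal Hbeta.
  set (K := 1 + beta / (2 * a * a)).
  assert (HK : 1 <= K).
  { assert (0 <= beta / (2 * a * a)) by (apply Rdiv_le_0_compat; nra). unfold K; lra. }
  exists (Rmin (a / 2) (al / K)). split.
  { apply Rmin_pos; [lra | apply Rdiv_lt_0_compat; lra]. }
  intros y B s Q Hs HB HQ.
  assert (Hm1 := Rmin_l (a / 2) (al / K)). assert (Hm2 := Rmin_r (a / 2) (al / K)).
  set (mu := Rmin (a / 2) (al / K)) in *.
  assert (HmuK : mu * K <= al).
  { apply (Rmult_le_compat_r K) in Hm2; [|lra].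
    replace (al / K * K) with al in Hm2 by (field; lra). lra. }
  set (r := y + B / (2 * a)). set (X := B / (2 * a)).
  (* y^2 <= 2 r^2 + 2 X^2 and 2 X^2 = B^2 / (2 a^2) <= (K - 1) s. *)
  assert (HX : 2 * (X * X) <= (K - 1) * s).
  { replace (2 * (X * X)) with (B ^ 2 / (2 * a * a)) by (unfold X; field; lra).
    replace ((K - 1) * s) with (beta * s / (2 * a * a)) by (unfold K; field; lra).
    unfold Rdiv; apply Rmult_le_compat_r; [left; apply Rinv_0_lt_compat; nra | lra]. }
  assert (Hy : y * y <= 2 * (r * r) + (K - 1) * s).
  { assert (Hyr : y = r - X) by (unfold r, X; ring).
    rewrite Hyr. pose proof (pow2_ge_0 (r + X)). nra. }
  assert (0 <= mu) by (apply Rlt_le, Rmin_pos; [lra | apply Rdiv_lt_0_compat; lra]).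
  replace ((y + B / (2 * a)) ^ 2) with (r * r) by (unfold r; ring).
  nra.
Qed.

Lemma qform_pos_def_coercive N : forall A,
  (forall v, 0 <= qform N A v) ->
  (forall v, qform N A v = 0 -> forall i, (i < N)%nat -> v i = 0) ->
  exists alpha, alpha > 0 /\ forall v, qform N A v >= alpha * sqnorm N v.
Proof.
  induction N as [|N IH]; intros A Hpos Hdef.
  { exists 1; split; [lra|]. intros v; unfold qform, sqnorm; simpl; lra. }
  assert (Ha : 0 < A N N).
  { assert (Hu := qform_S_unit N A).
    assert (Hnz : A N N <> 0).
    { intros Ha0. assert (H1 := Hdef _ (eq_trans Hu Ha0) N (Nat.lt_succ_diag_r N)).
      cbv beta in H1; rewrite Nat.eqb_refl in H1. lra. }
    specialize (Hpos (fun i => if (i =? N)%nat then 1 else 0)). lra. }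
  set (B := fun v => fsum N (fun i => (A i N + A N i) * v i)).
  (* Choosing v N so that the square in qform_S_schur vanishes. *)
  set (ext := fun v i => if (i =? N)%nat then - B v / (2 * A N N) else v i).
  assert (Hext : forall v i, (i < N)%nat -> ext v i = v i).
  { intros v i Hi; unfold ext; destruct (Nat.eqb_spec i N); [lia | auto]. }
  assert (Hschur : forall v, qform N (schur_compl N A) v = qform (S N) A (ext v)).
  { intros v. rewrite (qform_S_schur N A (ext v)) by lra; cbv zeta.
    rewrite (fsum_ext N _ (fun i => (A i N + A N i) * v i)) by (intros; rewrite Hext; auto).
    rewrite (qform_ext N _ (ext v) v) by auto.
    unfold ext at 1; rewrite Nat.eqb_refl. fold (B v).
    replace (- B v / (2 * A N N) + B v / (2 * A N N)) with 0 by (field; lra). lra. }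
  destruct (IH (schur_compl N A)) as [al [Hal Hbd]].
  { intros v. rewrite Hschur. apply Hpos. }
  { intros v Hv i Hi. rewrite Hschur in Hv. rewrite <- (Hext v i Hi). apply Hdef; auto. }
  destruct (schur_step_bound (A N N) al (sqnorm N (fun i => A i N + A N i)) Ha Hal)
    as [mu [Hmu Hstep]].
  { apply fsum_nonneg; intros i _; apply Rle_0_sqr. }
  exists mu; split; auto. intros v.
  rewrite (qform_S_schur N A v) by lra.
  replace (sqnorm (S N) v) with (sqnorm N v + v N * v N) by reflexivity.
  apply Hstep; auto.
  - apply fsum_nonneg; intros i _; apply Rle_0_sqr.
  - apply fsum_Cauchy_Schwarz.
Qed.

Lemma cont_on_plus f g a b :
  cont_on f a b -> cont_on g a b -> cont_on (fun t => f t + g t) a b.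
Proof. intros Hf Hg t Ht. apply limit_plus; auto. Qed.

Lemma cont_on_mult f g a b :
  cont_on f a b -> cont_on g a b -> cont_on (fun t => f t * g t) a b.
Proof. intros Hf Hg t Ht. apply limit_mul; auto. Qed.

Lemma cont_on_const c a b : cont_on (fun _ => c) a b.
Proof.
  intros t Ht eps He. exists 1; split; [lra|]. intros s _.
  simpl. unfold R_dist. rewrite Rminus_diag, Rabs_R0. lra.
Qed.

Lemma cont_on_fsum N g a b : (forall k, (k < N)%nat -> cont_on (g k) a b) ->
  cont_on (fun t => fsum N (fun k => g k t)) a b.
Proof.
  induction N as [|N IH]; intros H; simpl.
  - apply cont_on_const.
  - apply cont_on_plus; [apply IH; intros; apply H; lia | apply H; lia].
Qed.

Lemma cont_on_continuity f a b : (forall t, continuity_pt f t) -> cont_on f a b.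
Proof.
  intros Hf t Ht eps He. destruct (Hf t eps He) as [del [Hdel Hs]].
  exists del; split; auto. intros s [_ Hst].
  destruct (Req_dec s t) as [->|Hne].
  - simpl. unfold R_dist. rewrite Rminus_diag, Rabs_R0. lra.
  - apply Hs. split; [split; [exact I | auto] | auto].
Qed.

Lemma cont_on_near f a b t eps : cont_on f a b -> a <= t <= b -> eps > 0 ->
  exists del, del > 0 /\
    forall s, a <= s <= b -> Rabs (s - t) < del -> Rabs (f s - f t) < eps.
Proof.
  intros H Ht He. destruct (H t Ht eps He) as [del [Hd Hs]].
  exists del; split; auto. intros s Hs1 Hs2. apply (Hs s). split; auto.
Qed.

Lemma cont_on_eq_interior f a b c : a < b -> cont_on f a b ->
  (forall t, a < t < b -> f t = c) -> forall t, a <= t <= b -> f t = c.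
Proof.
  intros Hab Hc Hint t Ht.
  destruct (Req_dec (f t) c) as [|Hne]; auto. exfalso.
  assert (Heps : Rabs (f t - c) > 0) by (apply Rabs_pos_lt; lra).
  destruct (cont_on_near f a b t _ Hc Ht Heps) as [del [Hdel Hnear]].
  (* s moves from t towards the midpoint, hence lies in (a, b) and close to t. *)
  set (e := Rmin (1 / 2) (del / (b - a))).
  assert (He1 := Rmin_l (1 / 2) (del / (b - a))).
  assert (He2 := Rmin_r (1 / 2) (del / (b - a))).
  assert (He0 : 0 < e) by (apply Rmin_pos; [lra | apply Rdiv_lt_0_compat; lra]).
  fold e in He1, He2.
  set (s := t + ((a + b) / 2 - t) * e).
  assert (Hs : a < s < b) by (unfold s; split; nra).
  assert (Hed : e * (b - a) <= del).
  { apply (Rmult_le_compat_r (b - a)) in He2; [|lra].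
    replace (del / (b - a) * (b - a)) with del in He2 by (field; lra). lra. }
  assert (Hst : Rabs (s - t) < del).
  { unfold s. replace (t + ((a + b) / 2 - t) * e - t) with (((a + b) / 2 - t) * e) by ring.
    apply Rabs_def1; nra. }
  specialize (Hnear s ltac:(lra) Hst). rewrite (Hint s Hs), Rabs_minus_sym in Hnear. lra.
Qed.

Lemma derive0_eq_open h a b : (forall t, a < t < b -> derivable_pt_lim h t 0) ->
  forall s t, a < s < b -> a < t < b -> h s = h t.
Proof.
  intros Hd.
  assert (Hle : forall s t, a < s < b -> a < t < b -> s < t -> h s = h t).
  { intros s t Hs Ht Hst.
    destruct (MVT_cor2 h (fun _ => 0) s t Hst) as [c [Hc _]].
    - intros c Hc. apply Hd. lra.
    - lra. }
  intros s t Hs Ht. destruct (Rtotal_order s t) as [H|[H|H]].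
  - auto.
  - subst; auto.
  - symmetry; auto.
Qed.

Lemma linear_ode_zero a b k z : cont_on z a b ->
  (forall t, a < t < b -> derivable_pt_lim z t (- k * z t)) -> z a = 0 ->
  forall t, a <= t <= b -> z t = 0.
Proof.
  intros Hc Hd Ha t Ht.
  destruct (Req_dec a b) as [Hab|Hab]; [replace t with a by lra; auto|].
  assert (Hexp : forall s, derivable_pt_lim (fun s => exp (k * s)) s (k * exp (k * s))).
  { intros s. apply is_derive_Reals. auto_derive; auto; ring. }
  (* exp (k s) z s is an integrating factor: its derivative vanishes. *)
  set (h := fun s => exp (k * s) * z s).
  assert (Hh0 : forall s, a < s < b -> derivable_pt_lim h s 0).
  { intros s Hs. replace 0 with (k * exp (k * s) * z s + exp (k * s) * (- k * z s)) by ring.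
    exact (derivable_pt_lim_mult (fun s => exp (k * s)) z s _ _ (Hexp s) (Hd s Hs)). }
  set (m := (a + b) / 2).
  assert (Hhc : forall s, a <= s <= b -> h s = h m).
  { apply cont_on_eq_interior; [lra | |].
    - apply cont_on_mult; auto. apply cont_on_continuity. intros s.
      apply derivable_continuous_pt. exists (k * exp (k * s)). apply Hexp.
    - intros s Hs. apply (derive0_eq_open h a b Hh0); unfold m; lra. }
  assert (Hzero : h t = 0).
  { rewrite (Hhc t Ht), <- (Hhc a ltac:(lra)). unfold h. rewrite Ha. ring. }
  unfold h in Hzero. pose proof (exp_pos (k * t)). nra.
Qed.

Lemma is_derive_fsum N (g : nat -> R -> R) dg t :
  (forall k, (k < N)%nat -> is_derive (g k) t (dg k)) ->
  is_derive (fun s => fsum N (fun k => g k s)) t (fsum N dg).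
Proof.
  induction N as [|N IH]; intros H; simpl.
  - apply (is_derive_const (V := R_NormedModule) 0 t).
  - apply (is_derive_plus (V := R_NormedModule)); [apply IH; intros; apply H; lia | apply H; lia].
Qed.

Lemma is_RInt_fsum N (g : nat -> R -> R) (I : nat -> R) a b :
  (forall k, (k < N)%nat -> is_RInt (g k) a b (I k)) ->
  is_RInt (fun t => fsum N (fun k => g k t)) a b (fsum N I).
Proof.
  induction N as [|N IH]; intros H; simpl.
  - apply (is_RInt_ext (fun _ => 0)); [auto|].
    assert (H0 := is_RInt_const a b 0).
    unfold scal in H0; simpl in H0; unfold mult in H0; simpl in H0.
    rewrite Rmult_0_r in H0. exact H0.
  - apply (is_RInt_plus (V := R_NormedModule)); [apply IH; intros; apply H; lia | apply H; lia].
Qed.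

Lemma RInt_nonneg_zero_interior f a b t :
  cont_on f a b -> (forall s, 0 <= f s) -> ex_RInt f a b -> RInt f a b = 0 ->
  a < t < b -> f t = 0.
Proof.
  intros Hc Hp He HR Ht.
  destruct (Req_dec (f t) 0) as [Z|Z]; auto. exfalso.
  assert (Hpos : f t / 2 > 0) by (pose proof (Hp t); lra).
  destruct (cont_on_near f a b t _ Hc ltac:(lra) Hpos) as [del [Hdel Hs]].
  (* f exceeds f t / 2 on [c, e], a neighbourhood of t inside [a, b]. *)
  set (c := Rmax a (t - del / 2)). set (e := Rmin b (t + del / 2)).
  assert (c1 : a <= c) by apply Rmax_l. assert (c2 : t - del / 2 <= c) by apply Rmax_r.
  assert (c3 : c < t) by (apply Rmax_lub_lt; lra).
  assert (e1 : e <= b) by apply Rmin_l. assert (e2 : e <= t + del / 2) by apply Rmin_r.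
  assert (e3 : t < e) by (apply Rmin_glb_lt; lra).
  assert (Eac : ex_RInt f a c) by (apply (ex_RInt_Chasles_1 f a c b); [lra|auto]).
  assert (Ecb : ex_RInt f c b) by (apply (ex_RInt_Chasles_2 f a c b); [lra|auto]).
  assert (Ece : ex_RInt f c e) by (apply (ex_RInt_Chasles_1 f c e b); [lra|auto]).
  assert (Eeb : ex_RInt f e b) by (apply (ex_RInt_Chasles_2 f c e b); [lra|auto]).
  pose proof (RInt_Chasles f a c b Eac Ecb) as C1.
  pose proof (RInt_Chasles f c e b Ece Eeb) as C2.
  unfold plus in C1, C2; simpl in C1, C2.
  assert (0 <= RInt f a c) by (apply RInt_ge_0; auto).
  assert (0 <= RInt f e b) by (apply RInt_ge_0; auto).
  assert (Hmid : RInt (fun _ => f t / 2) c e <= RInt f c e).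
  { apply RInt_le; [lra | apply ex_RInt_const | auto |].
    intros s Hs'. pose proof (Hs s ltac:(lra) ltac:(apply Rabs_def1; lra)) as Hfs.
    apply Rabs_def2 in Hfs. lra. }
  rewrite RInt_const in Hmid.
  unfold scal in Hmid; simpl in Hmid; unfold mult in Hmid; simpl in Hmid.
  assert (0 < (e - c) * (f t / 2)) by (apply Rmult_lt_0_compat; lra).
  lra.
Qed.

Definition gram (w : R -> nat -> R) (a b : R) (i j : nat) : R :=
  RInt (fun t => w t i * w t j) a b.

Lemma is_RInt_gram_qform N w a b v :
  (forall i j, ex_RInt (fun t => w t i * w t j) a b) ->
  is_RInt (fun t => (fsum N (fun l => v l * w t l)) ^ 2) a b (qform N (gram w a b) v).
Proof.
  intros Hint.
  apply (is_RInt_ext (fun t => fsum N (fun i => fsum N (fun j => v i * v j * (w t i * w t j))))).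
  { intros t _. rewrite <- Rsqr_pow2; unfold Rsqr; rewrite fsum_mult.
    apply fsum_ext; intros; apply fsum_ext; intros; ring. }
  apply is_RInt_fsum; intros i _. apply is_RInt_fsum; intros j _.
  assert (H := is_RInt_scal _ a b (v i * v j) _ (RInt_correct _ _ _ (Hint i j))).
  unfold scal in H; simpl in H; unfold mult in H; simpl in H.
  replace (v i * gram w a b i j * v j) with (v i * v j * gram w a b i j) by ring.
  exact H.
Qed.

Lemma gram_coercive N w a b : a <= b ->
  (forall l, (l < N)%nat -> cont_on (fun t => w t l) a b) ->
  (forall i j, ex_RInt (fun t => w t i * w t j) a b) ->
  (forall v, (forall t, a < t < b -> fsum N (fun l => v l * w t l) = 0) ->
     forall l, (l < N)%nat -> v l = 0) ->
  exists alpha, alpha > 0 /\ forall v, qform N (gram w a b) v >= alpha * sqnorm N v.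
Proof.
  intros Hab Hcont Hint Hindep.
  set (W := fun v t => (fsum N (fun l => v l * w t l)) ^ 2).
  assert (HW : forall v, ex_RInt (W v) a b /\ RInt (W v) a b = qform N (gram w a b) v).
  { intros v. assert (H := is_RInt_gram_qform N w a b v Hint).
    split; [eexists; eauto | apply is_RInt_unique, H]. }
  apply qform_pos_def_coercive.
  - intros v. rewrite <- (proj2 (HW v)).
    apply RInt_ge_0; [auto | apply HW | intros; apply pow2_ge_0].
  - intros v Hv. apply Hindep. intros t Ht.
    assert (HWt : W v t = 0).
    { apply (RInt_nonneg_zero_interior (W v) a b t); auto.
      - assert (Hc : cont_on (fun t => fsum N (fun l => v l * w t l)) a b).
        { apply cont_on_fsum; intros l Hl. apply cont_on_mult; auto. apply cont_on_const. }
        repeat apply cont_on_mult; auto. apply cont_on_const.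
      - intros s; apply pow2_ge_0.
      - apply HW.
      - rewrite (proj2 (HW v)). auto. }
    unfold W in HWt. nra.
Qed.

Lemma incr_seq_le p (s : nat -> R) : (forall j, (S j < p)%nat -> s j < s (S j)) ->
  forall j k, (j <= k < p)%nat -> s j <= s k.
Proof.
  intros Hinc j k Hjk. induction k as [|k IH].
  - replace j with 0%nat by lia. lra.
  - destruct (Nat.eq_dec j (S k)) as [->|Hne]; [lra|].
    assert (s k < s (S k)) by (apply Hinc; lia).
    assert (s j <= s k) by (apply IH; lia). lra.
Qed.

Lemma wsig_cont_on n d x u a b :
  (forall l, (l < n)%nat -> cont_on (fun t => x t l) a b) ->
  (forall l, (l < d)%nat -> cont_on (fun t => u t l) a b) ->
  forall l, (l < n + d)%nat -> cont_on (fun t => wsig n d x u t l) a b.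
Proof.
  intros Hx Hu l Hl. unfold wsig.
  destruct (Nat.ltb_spec l n); [apply Hx; auto|].
  destruct (Nat.ltb_spec l (n + d)); [apply Hu; lia | lia].
Qed.

Lemma fsum_wsig n d x u t v : fsum (n + d) (fun l => v l * wsig n d x u t l)
  = fsum n (fun l => x t l * v l) + fsum d (fun j => u t j * v (n + j)%nat).
Proof.
  rewrite fsum_split. f_equal; apply fsum_ext; intros j Hj; unfold wsig.
  - destruct (Nat.ltb_spec j n); [ring | lia].
  - destruct (Nat.ltb_spec (n + j) n); [lia|].
    destruct (Nat.ltb_spec (n + j) (n + d)); [|lia].
    replace (n + j - n)%nat with j by lia. ring.
Qed.

(* The coefficient vector theta with Y(x, u) theta = e_0 (v . w): it places v
   in the columns of the first block row of Y. *)
Definition row0_coeff (n d : nat) (v : nat -> R) (c : nat) : R :=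
  if (c <? n)%nat then v c
  else if andb (n * n <=? c)%nat (c <? n * n + d)%nat then v (n + (c - n * n))%nat else 0.

Lemma row0_coeff_x n d v c : (c < n)%nat -> row0_coeff n d v c = v c.
Proof. intros Hc. unfold row0_coeff. destruct (Nat.ltb_spec c n); [auto | lia]. Qed.

Lemma row0_coeff_u n d v j : (j < d)%nat -> row0_coeff n d v (n * n + j) = v (n + j)%nat.
Proof.
  intros Hj. unfold row0_coeff.
  destruct (Nat.ltb_spec (n * n + j) n); [nia|].
  destruct (Nat.leb_spec (n * n) (n * n + j)); [|lia].
  destruct (Nat.ltb_spec (n * n + j) (n * n + d)); [|lia].
  simpl. do 2 f_equal. lia.
Qed.

Lemma Yent_row0_coeff n d xt ut v i : (i < n)%nat ->
  fsum (n * (n + d)) (fun c => Yent n d xt ut i c * row0_coeff n d v c)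
  = (if (i =? 0)%nat then 1 else 0)
    * (fsum n (fun l => xt l * v l) + fsum d (fun j => ut j * v (n + j)%nat)).
Proof.
  intros Hi. rewrite Nat.mul_add_distr_l, fsum_split.
  rewrite (fsum_trunc n (n * n)), (fsum_trunc d (n * d)).
  - rewrite Rmult_plus_distr_l, <- !fsum_scal.
    f_equal; apply fsum_ext; intros c Hc; unfold Yent.
    + rewrite row0_coeff_x by auto.
      destruct (Nat.ltb_spec c (n * n)); [|nia].
      rewrite Nat.div_small, Nat.mod_small by lia. destruct (i =? 0)%nat; ring.
    + rewrite row0_coeff_u by auto.
      destruct (Nat.ltb_spec (n * n + c) (n * n)); [lia|].
      replace (n * n + c - n * n)%nat with c by lia.
      rewrite Nat.div_small, Nat.mod_small by lia. destruct (i =? 0)%nat; ring.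
  - nia.
  - intros j Hj. unfold row0_coeff.
    destruct (Nat.ltb_spec (n * n + j) n); [nia|].
    destruct (Nat.ltb_spec (n * n + j) (n * n + d)); [lia|].
    rewrite Bool.andb_false_r. ring.
  - nia.
  - intros c Hc. unfold row0_coeff.
    destruct (Nat.ltb_spec c n); [lia|].
    destruct (Nat.leb_spec (n * n) c); [lia|]. simpl. ring.
Qed.

Section RowZeroDynamics.

Variables (n d : nat) (t0 tc km : R) (x u : R -> nat -> R) (m : R -> nat -> nat -> R).
Variables (p : nat) (tw : nat -> R).

Hypothesis hn : (1 <= n)%nat.
Hypothesis hm0 : forall i c, (i < n)%nat -> (c < n * (n + d))%nat -> m t0 i c = 0.
Hypothesis hmc : forall i c, (i < n)%nat -> (c < n * (n + d))%nat ->
  cont_on (fun t => m t i c) t0 tc.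
Hypothesis hmd : forall i c, (i < n)%nat -> (c < n * (n + d))%nat ->
  forall t, t0 < t < tc ->
  derivable_pt_lim (fun s => m s i c) t (Yent n d (x t) (u t) i c - km * m t i c).
Hypothesis htw0 : t0 <= tw 0%nat.
Hypothesis htw_inc : forall j, (S j < p)%nat -> tw j < tw (S j).
Hypothesis htwp : tw (p - 1)%nat = tc.
Hypothesis hrank : stacked_full_col_rank n p (n * (n + d)) m tw.

Lemma wsig_orthogonal_zero v :
  (forall t, t0 < t < tc -> fsum (n + d) (fun l => v l * wsig n d x u t l) = 0) ->
  forall l, (l < n + d)%nat -> v l = 0.
Proof.
  intros Hw.
  set (th := row0_coeff n d v).
  assert (Hrow : forall i, (i < n)%nat -> forall t, t0 <= t <= tc ->
            fsum (n * (n + d)) (fun c => m t i c * th c) = 0).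
  { intros i Hi. apply (linear_ode_zero t0 tc km).
    - apply cont_on_fsum. intros c Hc. apply cont_on_mult; [auto | apply cont_on_const].
    - intros t Ht. apply is_derive_Reals.
      replace (- km * fsum (n * (n + d)) (fun c => m t i c * th c))
        with (fsum (n * (n + d)) (fun c => (Yent n d (x t) (u t) i c - km * m t i c) * th c)).
      + apply is_derive_fsum. intros c Hc.
        eapply is_derive_ext; [intros; apply Rmult_comm|].
        rewrite Rmult_comm. apply is_derive_scal, is_derive_Reals, hmd; auto.
      + unfold Rminus. rewrite (fsum_ext _ _ (fun c => Yent n d (x t) (u t) i c * th c
            + - km * (m t i c * th c))) by (intros; ring).
        rewrite fsum_add, fsum_scal. unfold th.
        rewrite Yent_row0_coeff, <- fsum_wsig, Hw by auto. ring.
    - apply fsum_eq0. intros c Hc. rewrite hm0 by auto. ring. }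
  assert (Hth : forall c, (c < n * (n + d))%nat -> th c = 0).
  { apply hrank. intros j i Hj Hi. apply Hrow; auto. split.
    - assert (tw 0%nat <= tw j) by (apply (incr_seq_le p); auto; lia). lra.
    - rewrite <- htwp. apply (incr_seq_le p); auto; lia. }
  intros l Hl. destruct (Nat.ltb_spec l n) as [Hln|Hln].
  - rewrite <- (row0_coeff_x n d v l) by auto. apply Hth. nia.
  - replace l with (n + (l - n))%nat by lia.
    rewrite <- (row0_coeff_u n d v (l - n)) by lia. apply Hth.
    assert (l - n < d)%nat by lia. nia.
Qed.

End RowZeroDynamics.

Theorem lemma1
  (n d : nat) (hn : (1 <= n)%nat)
  (t0 tc km : R) (hkm : km > 0)
  (x u : R -> nat -> R)
  (hx : forall l, (l < n)%nat -> cont_on (fun t => x t l) t0 tc)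
  (hu : forall l, (l < d)%nat -> cont_on (fun t => u t l) t0 tc)
  (m : R -> nat -> nat -> R)
  (hm0 : forall i c, (i < n)%nat -> (c < n * (n + d))%nat -> m t0 i c = 0)
  (hmc : forall i c, (i < n)%nat -> (c < n * (n + d))%nat ->
           cont_on (fun t => m t i c) t0 tc)
  (hmd : forall i c, (i < n)%nat -> (c < n * (n + d))%nat ->
           forall t, t0 < t < tc ->
           derivable_pt_lim (fun s => m s i c) t
             (Yent n d (x t) (u t) i c - km * m t i c))
  (p : nat) (tw : nat -> R)
  (hp : (n + d <= p)%nat)
  (htw0 : t0 <= tw 0%nat)
  (htw_inc : forall j, (S j < p)%nat -> tw j < tw (S j))
  (htwp : tw (p - 1)%nat = tc)
  (hrank : stacked_full_col_rank n p (n * (n + d)) m tw) :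
  exciting (n + d) (wsig n d x u) t0 tc.
Proof.
  set (w := wsig n d x u).
  (* With no integrability proof the quantifier in [exciting] is vacuous. *)
  destruct (classic (inhabited (forall i j, Riemann_integrable (fun t => w t i * w t j) t0 tc)))
    as [[pr0] | Hno].
  2: { exists 1. split; [lra|]. intros pr. exfalso. apply Hno. constructor. exact pr. }
  assert (Hab : t0 <= tc).
  { rewrite <- htwp.
    assert (tw 0%nat <= tw (p - 1)%nat) by (apply (incr_seq_le p); auto; lia). lra. }
  destruct (gram_coercive (n + d) w t0 tc Hab) as [alpha [Halpha Hbound]].
  - apply wsig_cont_on; auto.
  - intros i j. apply ex_RInt_Reals_1, pr0.
  - apply (wsig_orthogonal_zero n d t0 tc km x u m p tw); auto.
  - exists alpha. split; auto. intros pr v.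
    specialize (Hbound v). unfold qform, gram, sqnorm in Hbound.
    erewrite fsum_ext; [exact Hbound|]. intros i _. apply fsum_ext. intros j _.
    rewrite (RInt_Reals _ _ _ (pr i j)). reflexivity.
Qed.
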